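(* Let $n,m\in\mathbb{N}$. (i) Let $\phi\in C(\mathbb{R};\mathbb{C})$ and $\varrho:\mathbb{C}\to\mathbb{C}$, $\varrho(z)=\phi(\mathrm{Re}(z))$. Then $\mathcal{NN}^\varrho_{n,m,2n-1}$ is not universal. (ii) Let $\varrho:\mathbb{C}\to\mathbb{R}$ (real-valued). Then $\mathcal{NN}^\varrho_{n,m,2m-1}$ is not universal.
   Context: For $\varrho:\mathbb{C}\to\mathbb{C}$ and $n,m,W\in\mathbb{N}$, $\mathcal{NN}^\varrho_{n,m,W}$ denotes the set of all functions $\mathbb{C}^n\to\mathbb{C}^m$ of the form $V_L\circ\varrho^{\times W}\circ V_{L-1}\circ\cdots\circ\varrho^{\times W}\circ V_1$ with arbitrary depth $L\ge 2$, where $V_1:\mathbb{C}^n\to\mathbb{C}^W$, $V_2,\dots,V_{L-1}:\mathbb{C}^W\to\mathbb{C}^W$, $V_L:\mathbb{C}^W\to\mathbb{C}^m$ are $\mathbb{C}$-affine maps ($z\mapsto Az+b$ with complex $A,b$) and $\varrho^{\times W}$ applies $\varrho$ componentwise. A class $\mathcal{F}$ of functions $\mathbb{C}^n\to\mathbb{C}^m$ is universal if for every $g\in C(\mathbb{C}^n;\mathbb{C}^m)$, compact $K\subseteq\mathbb{C}^n$ and $\varepsilon>0$ there is $f\in\mathcal{F}$ with $\sup_{z\in K}\|f(z)-g(z)\|<\varepsilon$. *)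

From HB Require Import structures.
From mathcomp Require Import all_boot all_order all_algebra.
From mathcomp Require Import all_classical all_reals topology normedtype.
From mathcomp Require Export complex.

Set Implicit Arguments.
Unset Strict Implicit.
Unset Printing Implicit Defensive.

Import Order.TTheory GRing.Theory Num.Theory.
Import numFieldNormedType.Exports.
Local Open Scope ring_scope.

(* The complex numbers R[i], packaged as a numClosedFieldType so that
   MathComp-Analysis equips them (and row vectors over them) with their
   standard topology / norm (modulus). *)
Definition Cx (R : rcfType) : numClosedFieldType := R[i].

(* C^k is represented by row vectors 'rV[Cx R]_k, with its canonical
   (max-norm) normed-space topology over R[i]. *)

(* Apply the layers: z |-> V_L (rho^W (V_{L-1} ( ... rho^W (V_1 z)))).
   [hs] lists the hidden affine maps V_2, ..., V_{L-1} (in order),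
   each as a pair (A, b) acting by x |-> x *m A + b. *)
Definition nn_eval (R : rcfType) (rho : Cx R -> Cx R) (n m W : nat)
  (A1 : 'M[Cx R]_(n, W)) (b1 : 'rV[Cx R]_W)
  (hs : seq ('M[Cx R]_(W, W) * 'rV[Cx R]_W))
  (AL : 'M[Cx R]_(W, m)) (bL : 'rV[Cx R]_m) (z : 'rV[Cx R]_n) : 'rV[Cx R]_m :=
  let y := foldl (fun x (p : 'M[Cx R]_(W, W) * 'rV[Cx R]_W) =>
                    map_mx rho x *m p.1 + p.2) (z *m A1 + b1) hs in
  map_mx rho y *m AL + bL.

(* The class NN^rho_{n,m,W} (arbitrary depth L >= 2, L = size hs + 2). *)
Definition NN (R : rcfType) (rho : Cx R -> Cx R) (n m W : nat)
  (f : 'rV[Cx R]_n -> 'rV[Cx R]_m) : Prop :=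
  exists A1 b1 hs AL bL, f = @nn_eval R rho n m W A1 b1 hs AL bL.

(* Universality of a class F of functions C^n -> C^m:
   sup_{z in K} ||f z - g z|| < eps, written as: there is d < eps bounding
   ||f z - g z|| on K. *)
Definition universal (R : realType) (n m : nat)
  (F : ('rV[Cx R]_n -> 'rV[Cx R]_m) -> Prop) : Prop :=
  forall g : 'rV[Cx R]_n -> 'rV[Cx R]_m, continuous g ->
  forall K : set 'rV[Cx R]_n, compact K ->
  forall eps : R, 0 < eps ->
  exists f, F f /\ exists d : R, d < eps /\
    forall z, K z -> `|f z - g z| <= ((d%:C)%C : Cx R).

Arguments nn_eval {R} rho n m W A1 b1 hs AL bL z.
Arguments NN {R} rho n m W f.
Arguments universal {R} n m F.

From HB Require Import structures.
From mathcomp Require Import all_boot all_order all_algebra.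
From mathcomp Require Import all_classical all_reals topology normedtype.
From mathcomp Require Import complex interval_inference.
Import Order.TTheory GRing.Theory Num.Theory.
Import numFieldNormedType.Exports.
Local Open Scope ring_scope.

(* Both parts are a dimension count: C^k is a real vector space of
   dimension 2k, so a real-linear map R^(2k) -> R^(2k-1) has a nonzero
   kernel and a real-linear map R^(2k-1) -> R^(2k) misses a direction.

   (i) For rho z = phi (Re z) a network sees its input z only through
   Re (z A1 + b1), and z |-> Re (z A1) is real-linear R^(2n) -> R^(2n-1).
   A kernel vector v, normalised into the box [-1,1]^(2n), is thus
   indistinguishable from 0, whereas the target z |-> |z| (1,...,1)
   moves by at least 1 between 0 and v: no network is within 1/2.

   (ii) For real-valued rho the output is r AL + bL with r real, and
   r |-> r AL is real-linear R^(2m-1) -> R^(2m); a nonzero real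
   functional ell on C^m kills its image, so ell is constant on every
   network.  A continuous target interpolating 0 and the 2m real unit
   vectors of C^m (Lagrange interpolation) moves ell by 1, while an
   eps-approximation can only move it by 4 m eps. *)

Lemma mx_entry_le_norm {K : numDomainType} {p q : nat} (x : 'M[K]_(p, q)) i j :
  `|x i j| <= `|x|.
Proof.
rewrite [leRHS]/Num.Def.normr /= mx_normE -[leLHS]nngE num_le.
exact: (le_bigmax _ _ (i, j)).
Qed.

(* The count behind both parts: 2k - 1 real parameters cannot fill 2k. *)
Lemma realdim_deficit {k : nat} : (0 < k)%N -> (2 * k - 1 < k + k)%N.
Proof. by move=> k_gt0; rewrite mul2n -addnn ltn_subrL addn_gt0 k_gt0. Qed.

Lemma nonzero_kernel_vector {F : fieldType} {p q : nat} (N : 'M[F]_(p, q)) :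
  (q < p)%N -> exists2 w : 'rV[F]_p, w != 0 & w *m N = 0.
Proof.
move=> q_lt_p.
have : \rank (kermx N) != 0%N.
  rewrite mxrank_ker subn_eq0 -ltnNge.
  exact: leq_ltn_trans (rank_leq_col N) q_lt_p.
rewrite mxrank_eq0 => /eqP kerN_neq0.
have [i rowi_neq0] : exists i, row i (kermx N) != 0.
  apply/existsP; rewrite -negb_forall; apply/negP => /forallP rows0.
  by apply: kerN_neq0; apply/row_matrixP => i; rewrite row0; apply/eqP.
by exists (row i (kermx N)); rewrite // -row_mul mulmx_ker row0.
Qed.

Lemma normalized_kernel_vector {F : realFieldType} {p q : nat} (N : 'M[F]_(p, q)) :
  (q < p)%N -> exists w : 'rV[F]_p,
    [/\ w *m N = 0, forall j, `|w 0 j| <= 1 & exists j, `|w 0 j| = 1].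
Proof.
move=> q_lt_p; have [w w_neq0 wN] := nonzero_kernel_vector N q_lt_p.
have w_gt0 : 0 < `|w| by rewrite normr_gt0.
have [[i j] wij] := mx_norm_neq0 (lt0r_neq0 w_gt0).
have normE k : `|(`|w|^-1 *: w) 0 k| = `|w|^-1 * `|w 0 k|.
  by rewrite mxE normrM ger0_norm // invr_ge0 ltW.
exists (`|w|^-1 *: w); split.
- by rewrite -scalemxAl wN scaler0.
- by move=> k; rewrite normE ler_pdivrMl // mulr1 mx_entry_le_norm.
- exists j; rewrite normE (ord1 i) in wij *.
  by rewrite -[X in _ * X]wij mulVf // lt0r_neq0.
Qed.

Lemma functional_bound (F : realDomainType) (p : nat) (y w : 'rV[F]_p) (d : F) :
  (forall j, `|y 0 j| <= d) -> (forall j, `|w 0 j| <= 1) ->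
  `|(y *m w^T) 0 0| <= d *+ p.
Proof.
move=> y_le w_le; rewrite mxE; apply: le_trans (ler_norm_sum _ _ _) _.
rewrite -[p in d *+ p]card_ord -sumr_const; apply: ler_sum => j _.
by rewrite mxE normrM -[d]mulr1 ler_pM.
Qed.

Lemma close_to_common {K : numDomainType} {V : normedZmodType K} {a b c : V} {d : K} :
  `|c - a| <= d -> `|c - b| <= d -> `|a - b| <= d + d.
Proof.
move=> ca cb; apply: le_trans (ler_distD c a b) _.
by rewrite distrC lerD.
Qed.

Section Interpolation.
Variables (K : numFieldType) (V : normedModType K).

Lemma continuous_sum (T : topologicalType) (I : Type) (s : seq I) (P : pred I)
    (F : I -> T -> V) :
  (forall i, continuous (F i)) -> continuous (\sum_(i <- s | P i) F i).
Proof.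
move=> F_cont; apply: (big_ind (fun h : T -> V => continuous h)) => //.
- exact: cst_continuous.
- by move=> f g f_cont g_cont x; apply: cvgD; [exact: f_cont | exact: g_cont].
Qed.

Lemma continuous_prod (T : topologicalType) (I : Type) (s : seq I) (P : pred I)
    (F : I -> T -> K) :
  (forall i, continuous (F i)) -> continuous (\prod_(i <- s | P i) F i).
Proof.
move=> F_cont; apply: (big_ind (fun h : T -> K => continuous h)) => //.
- exact: cst_continuous.
- by move=> f g f_cont g_cont x; apply: cvgM; [exact: f_cont | exact: g_cont].
Qed.

Definition lagrange_basis (N s : nat) : K -> K :=
  \prod_(t < N | (t : nat) != s) (fun x => (x - t%:R) / (s%:R - t%:R)).

Lemma lagrange_basis_continuous (N s : nat) : continuous (lagrange_basis N s).
Proof.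
have affine_cont (a c : K) : continuous (fun y => (y - a) * c).
  move=> x; apply: (continuous_comp (f := fun y => y - a) (g := *%R^~ c)).
    exact: (cvgB cvg_id (cvg_cst _)).
  exact: mulrr_continuous.
by apply: continuous_prod => t; exact: affine_cont.
Qed.

Lemma lagrange_basis_node (N s t : nat) :
  (t < N)%N -> lagrange_basis N s t%:R = (s == t)%:R.
Proof.
move=> t_lt_N; rewrite /lagrange_basis fct_prodE.
have [<-|s_neq_t] := eqVneq s t.
  by apply: big1 => t' t'_neq_s; rewrite divff // subr_eq0 eqr_nat eq_sym.
rewrite (bigD1 (Ordinal t_lt_N)) /=; last by rewrite eq_sym.
by rewrite subrr !mul0r.
Qed.

Lemma lagrange_interpolation (N : nat) (v : nat -> V) :
  exists2 G : K -> V, continuous G & forall t, (t < N)%N -> G t%:R = v t.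
Proof.
exists (\sum_(s < N) (fun x => lagrange_basis N s x *: v s)).
  by apply: continuous_sum => s x; apply: continuousZr_tmp;
    exact: lagrange_basis_continuous.
move=> t t_lt_N; rewrite fct_sumE (bigD1 (Ordinal t_lt_N)) //=.
rewrite lagrange_basis_node // eqxx scale1r big1 ?addr0 // => s s_neq_t.
by move: s_neq_t; rewrite -val_eqE lagrange_basis_node //= => /negbTE ->; rewrite scale0r.
Qed.

End Interpolation.

Lemma nn_eval_first_layer {R : rcfType} (rho : Cx R -> Cx R) {n m W : nat} A1 b1 hs AL bL
    (z z' : 'rV[Cx R]_n) :
  map_mx rho (z *m A1 + b1) = map_mx rho (z' *m A1 + b1) ->
  nn_eval rho n m W A1 b1 hs AL bL z = nn_eval rho n m W A1 b1 hs AL bL z'.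
Proof. by rewrite /nn_eval; case: hs => [|p hs] /= ->. Qed.

Lemma nn_eval_last_layer {R : rcfType} (rho : Cx R -> R) {n m W : nat} A1 b1 hs AL bL
    (z : 'rV[Cx R]_n) :
  exists r : 'rV[R]_W, nn_eval (fun x => (rho x)%:C%C) n m W A1 b1 hs AL bL z =
    map_mx (fun a => a%:C%C) r *m AL + bL.
Proof.
rewrite /nn_eval; set y := foldl _ _ _.
by exists (map_mx rho y); rewrite -map_mx_comp.
Qed.

Section ComplexNetworks.
Variable R : realType.
Local Notation C := (Cx R).
Local Open Scope complex_scope.

(* Re and Im are additive (they are not canonically morphisms on Cx R). *)
Lemma ReD (x y : C) : complex.Re (x + y) = complex.Re x + complex.Re y.
Proof. by rewrite /Cx in x y *; destruct x; destruct y. Qed.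

Lemma ImD (x y : C) : complex.Im (x + y) = complex.Im x + complex.Im y.
Proof. by rewrite /Cx in x y *; destruct x; destruct y. Qed.

Lemma ReB (x y : C) : complex.Re (x - y) = complex.Re x - complex.Re y.
Proof. by rewrite /Cx in x y *; destruct x; destruct y. Qed.

Lemma ImB (x y : C) : complex.Im (x - y) = complex.Im x - complex.Im y.
Proof. by rewrite /Cx in x y *; destruct x; destruct y. Qed.

Lemma Re_sum (I : Type) (s : seq I) (F : I -> C) :
  complex.Re (\sum_(i <- s) F i) = \sum_(i <- s) complex.Re (F i).
Proof. exact: (big_morph _ ReD). Qed.

Lemma Im_sum (I : Type) (s : seq I) (F : I -> C) :
  complex.Im (\sum_(i <- s) F i) = \sum_(i <- s) complex.Im (F i).
Proof. exact: (big_morph _ ImD). Qed.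

Definition of_pair (p : R * R) : C := p.1%:C + 'i * p.2%:C.

Lemma of_pair_continuous : continuous of_pair.
Proof.
have real_cont : continuous (fun a : R => a%:C : C).
  move=> a; apply/cvgrPdist_lt; rewrite /Cx => -[e e'].
  rewrite ltcE /= => /andP[/eqP-> e_gt0]; near=> b.
  rewrite -rmorphB normc_def /= expr0n addr0 sqrtr_sqr ltcR.
  by near: b; move: e_gt0; apply/(cvgrPdist_lt _ _).1; exact: cvg_id.
move=> p; rewrite /of_pair; apply: cvgD.
  by apply: (continuous_comp (f := fst)); [exact: cvg_fst | exact: real_cont].
apply: cvgM; first exact: cvg_cst.
by apply: (continuous_comp (f := snd)); [exact: cvg_snd | exact: real_cont].
Unshelve. all: by end_near.
Qed.

Lemma Re_of_pair (a b : R) : complex.Re (of_pair (a, b)) = a.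
Proof. by rewrite /= !(mul0r, mul1r, subr0, addr0). Qed.

Lemma Im_of_pair (a b : R) : complex.Im (of_pair (a, b)) = b.
Proof. by rewrite /= !(mul0r, mul1r, mulr0, addr0, add0r). Qed.

Lemma Re_of_pair_mul (a b : R) (z : C) :
  complex.Re (of_pair (a, b) * z) = a * complex.Re z - b * complex.Im z.
Proof.
by rewrite /Cx in z *; case: z => x y; rewrite /= !(mul0r, mul1r, subr0, addr0, add0r).
Qed.

Lemma Re_Im_le_norm (z : C) : (`|complex.Re z|)%:C <= `|z| /\ (`|complex.Im z|)%:C <= `|z|.
Proof.
rewrite normc_def !lecR -!sqrtr_sqr; split; apply: ler_wsqrtr.
  by rewrite lerDl sqr_ge0.
by rewrite lerDr sqr_ge0.
Qed.

Definition realify {p k : nat} (A : 'M[C]_(p, k)) : 'M[R]_(p, k + k) :=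
  row_mx (map_mx (@complex.Re R) A) (map_mx (@complex.Im R) A).

Definition complexify {k : nat} (y : 'rV[R]_(k + k)) : 'rV[C]_k :=
  \row_i of_pair (y 0 (lshift k i), y 0 (rshift k i)).

Lemma realify_complexify {k : nat} (y : 'rV[R]_(k + k)) :
  realify (complexify y) = y.
Proof.
rewrite -[RHS]hsubmxK; congr row_mx; apply/matrixP => i j;
  by rewrite (ord1 i) !mxE ?Re_of_pair ?Im_of_pair.
Qed.

Lemma realifyB {p k : nat} (A B : 'M[C]_(p, k)) :
  realify (A - B) = realify A - realify B.
Proof.
rewrite /realify opp_row_mx add_row_mx.
by congr row_mx; apply/matrixP => i j; rewrite !mxE ?ReB ?ImB.
Qed.

Lemma realify_real_mul {p k : nat} (r : 'rV[R]_p) (A : 'M[C]_(p, k)) :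
  realify (map_mx (fun a => a%:C) r *m A) = r *m realify A.
Proof.
rewrite /realify mul_mx_row; congr row_mx; apply/matrixP => i j; rewrite !mxE.
  rewrite Re_sum; apply: eq_bigr => l _; rewrite !mxE.
  by case: (A l j) => x y; rewrite /= !(mul0r, subr0).
rewrite Im_sum; apply: eq_bigr => l _; rewrite !mxE.
by case: (A l j) => x y; rewrite /= !(mul0r, addr0).
Qed.

Lemma Re_complexify_mul {k q : nat} (y : 'rV[R]_(k + k)) (A : 'M[C]_(k, q)) :
  map_mx (@complex.Re R) (complexify y *m A) =
  y *m col_mx (map_mx (@complex.Re R) A) (- map_mx (@complex.Im R) A).
Proof.
rewrite -{2}(hsubmxK y) mul_row_col; apply/matrixP => i j.
rewrite !mxE Re_sum -big_split; apply: eq_bigr => l _.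
by rewrite !mxE (ord1 i) Re_of_pair_mul mulrN.
Qed.

Lemma realify_entry_le {k : nat} (x : 'rV[C]_k) j :
  (`|realify x 0 j|)%:C <= `|x|.
Proof.
rewrite /realify mxE; case: (fintype.split j) => i /=; rewrite mxE;
  apply: le_trans (mx_entry_le_norm x 0 i); apply (Re_Im_le_norm (x 0 i)).
Qed.

Lemma complexify_entry_le {k : nat} (y : 'rV[R]_(k + k)) j :
  (`|y 0 j|)%:C <= `|complexify y|.
Proof. by rewrite -{1}(realify_complexify y) realify_entry_le. Qed.

Definition unit_square : set C :=
  of_pair @` (`[-1, 1]%classic `*` `[-1, 1]%classic).

Definition unit_box (n : nat) : set 'rV[C]_n := [set z | forall i, unit_square (z 0 i)].

Lemma unit_box_compact (n : nat) : compact (unit_box n).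
Proof.
apply: (@rV_compact _ n (fun=> unit_square)) => _; apply: continuous_compact.
  by apply: continuous_subspaceT; exact: of_pair_continuous.
by apply: compact_setX; exact: segment_compact.
Qed.

Lemma complexify_in_unit_box {n : nat} (y : 'rV[R]_(n + n)) :
  (forall j, `|y 0 j| <= 1) -> unit_box n (complexify y).
Proof.
move=> y_le i; rewrite mxE; eexists => //.
by split; rewrite /= in_itv /= -ler_norml.
Qed.

Lemma real_part_activation_not_universal (n m : nat) (phi : R -> C) :
  (0 < n)%N -> (0 < m)%N ->
  ~ universal n m (NN (fun z : C => phi (complex.Re z)) n m (2 * n - 1)).
Proof.
move=> n_gt0 m_gt0 univ.
pose g (z : 'rV[C]_n) := `|z| *: (const_mx 1 : 'rV[C]_m).
have g_cont : continuous g.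
  by move=> z; apply: continuousZr_tmp; exact: norm_continuous.
have half_gt0 : 0 < 2^-1 :> R by rewrite invr_gt0 ltr0n.
have [f [[A1 [b1 [hs [AL [bL ->]]]]] [d [d_lt approx]]]] :=
  univ g g_cont _ (unit_box_compact n) _ half_gt0.
pose N := col_mx (map_mx (@complex.Re R) A1) (- map_mx (@complex.Im R) A1).
have [w [wN w_le [j w_j]]] := normalized_kernel_vector N (realdim_deficit n_gt0).
pose v := complexify w.
have fv_f0 : nn_eval (fun z => phi (complex.Re z)) n m _ A1 b1 hs AL bL v =
             nn_eval (fun z => phi (complex.Re z)) n m _ A1 b1 hs AL bL 0.
  apply: nn_eval_first_layer; rewrite mul0mx add0r.
  apply/matrixP => i k; rewrite !mxE ReD.
  have /matrixP/(_ i k) := Re_complexify_mul w A1.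
  by rewrite wN !mxE => ->; rewrite add0r.
have g_v : 1 <= `|g v|.
  rewrite normrZ normr_id; apply: mulr_ege1.
    by apply: le_trans (complexify_entry_le w j); rewrite w_j.
  by apply: le_trans (mx_entry_le_norm _ 0 (Ordinal m_gt0)); rewrite mxE normr1.
have g_0 : g 0 = 0 by rewrite /g normr0 scale0r.
have zero_box : unit_box n 0.
  move=> i; rewrite mxE; exists (0, 0).
    by split; rewrite /= in_itv /= lerN10 ler01.
  by rewrite /of_pair rmorph0 mulr0 addr0.
have := approx _ (complexify_in_unit_box w w_le); rewrite fv_f0 => approx_v.
have := close_to_common approx_v (approx _ zero_box).
rewrite g_0 subr0 -rmorphD => /(le_trans g_v); rewrite lecR.
apply/negP; rewrite -ltNge.
by rewrite [X in _ < X](splitr 1) mul1r ltrD.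
Qed.

Lemma realified_functional_bound {k : nat} (x : 'rV[C]_k) (w : 'rV[R]_(k + k)) (d : R) :
  `|x| <= d%:C -> (forall j, `|w 0 j| <= 1) -> `|(realify x *m w^T) 0 0| <= d *+ (k + k).
Proof.
move=> x_le w_le; apply: functional_bound w_le => j; rewrite -lecR.
exact: le_trans (realify_entry_le x j) x_le.
Qed.

Definition unit_target (m s : nat) : 'rV[C]_m :=
  if s is s'.+1 then complexify (\row_(j < m + m) ((j : nat) == s')%:R) else 0.

Lemma unit_target_functional {m : nat} (w : 'rV[R]_(m + m)) (j : 'I_(m + m)) :
  (realify (unit_target m j.+1) *m w^T) 0 0 = w 0 j.
Proof.
rewrite /unit_target realify_complexify.
have -> : \row_(k < m + m) ((k : nat) == j)%:R = delta_mx 0 j :> 'rV[R]_(m + m).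
  by apply/matrixP => i k; rewrite !mxE (ord1 i) eqxx.
by rewrite -rowE !mxE.
Qed.

(* Some continuous function on C^n attains all the targets on a finite (hence
   compact) set: interpolate along the diagonal line of the first coordinate. *)
Lemma unit_target_interpolation (n m : nat) : (0 < n)%N ->
  exists2 g : 'rV[C]_n -> 'rV[C]_m, continuous g &
  exists2 K : set 'rV[C]_n, compact K &
    forall s, (s <= m + m)%N -> exists2 z, K z & g z = unit_target m s.
Proof.
move=> n_gt0.
have [G G_cont G_node] := lagrange_interpolation _ _ (m + m).+1 (unit_target m).
exists (fun z => G (z 0 (Ordinal n_gt0))).
  move=> z; apply: continuous_comp; last exact: G_cont.
  exact: coord_continuous.
pose node (s : nat) : 'rV[C]_n := const_mx s%:R.
exists (\big[setU/set0]_(s < (m + m).+1) [set node s]%classic).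
  by apply: bigsetU_compact => s _; exact: compact_set1.
move=> s s_le; exists (node s); last by rewrite mxE G_node.
by rewrite (bigD1 (Ordinal (n := (m + m).+1) s_le)) //=; left.
Qed.

Lemma real_valued_activation_not_universal (n m : nat) (rho : C -> R) :
  (0 < n)%N -> (0 < m)%N ->
  ~ universal n m (NN (fun z : C => (rho z)%:C) n m (2 * m - 1)).
Proof.
move=> n_gt0 m_gt0 univ.
have [g g_cont [K K_compact K_target]] := unit_target_interpolation n m n_gt0.
have eps_gt0 : 0 < (4 * m)%:R^-1 :> R by rewrite invr_gt0 ltr0n muln_gt0.
have [f [[A1 [b1 [hs [AL [bL ->]]]]] [d [d_lt approx]]]] :=
  univ g g_cont K K_compact _ eps_gt0.
have [w [wN w_le [j w_j]]] :=
  normalized_kernel_vector (realify AL)^T (realdim_deficit m_gt0).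
pose ell (x : 'rV[C]_m) := (realify x *m w^T) 0 0.
have ellB x y : ell (x - y) = ell x - ell y by rewrite /ell realifyB mulmxBl !mxE.
have ell_f z : ell (nn_eval (fun x => (rho x)%:C) n m _ A1 b1 hs AL bL z) = ell bL.
  have [r ->] := nn_eval_last_layer rho A1 b1 hs AL bL z.
  apply/eqP; rewrite -subr_eq0 -ellB addrK /ell realify_real_mul -mulmxA.
  by rewrite -[realify AL]trmxK -trmx_mul wN trmx0 mulmx0 mxE.
have ell_approx s : (s <= m + m)%N ->
    `|ell bL - ell (unit_target m s)| <= d *+ (m + m).
  move=> s_le; have [z Kz <-] := K_target s s_le.
  by rewrite -(ell_f z) -ellB realified_functional_bound // approx.
have ell0 : ell 0 = 0.
  by rewrite -[X in ell X = _](subrr (0 : 'rV[C]_m)) ellB subrr.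
have := close_to_common (ell_approx _ (ltn_ord j)) (ell_approx _ (leq0n _)).
rewrite /ell unit_target_functional -/(ell 0) ell0 subr0 w_j -mulrnDr -mulr_natr.
have -> : ((m + m) + (m + m) = 4 * m)%N by rewrite !addnn -!mul2n mulnA.
apply/negP; rewrite -ltNge -ltr_pdivlMr ?mul1r //.
by rewrite ltr0n muln_gt0 m_gt0.
Qed.

End ComplexNetworks.

Theorem theorem6p4 (R : realType) (n m : nat) (n_gt0 : (0 < n)%N) (m_gt0 : (0 < m)%N) :
  (forall phi : R -> Cx R, continuous phi ->
     ~ universal n m (NN (fun z : Cx R => phi (complex.Re z)) n m (2 * n - 1)))
  /\
  (forall rho : Cx R -> R,
     ~ universal n m (NN (fun z : Cx R => ((rho z)%:C)%C : Cx R) n m (2 * m - 1))).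
Proof.
split.
- by move=> phi _; exact: real_part_activation_not_universal.
- by move=> rho; exact: real_valued_activation_not_universal.
Qed.
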